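(* Let $d,r,s$ be positive integers. Let $G$ be a soluble group of derived length $d$ generated by a set $X$ such that every element of $X$ has finite order dividing $r$ and has at most $s$ conjugates in $G$. Then $G$ has finite exponent bounded by a function of $d,r,s$ only. *)

From Stdlib Require Import List Arith.
Set Implicit Arguments.

Record Group := MkGroup {
  carrier :> Type;
  gmul : carrier -> carrier -> carrier;
  ginv : carrier -> carrier;
  gone : carrier;
  gmul_assoc : forall x y z, gmul x (gmul y z) = gmul (gmul x y) z;
  gmul_1l : forall x, gmul gone x = x;
  gmul_Vl : forall x, gmul (ginv x) x = gone
}.

Section GroupDefs.
Variable G : Group.

Fixpoint gpow (x : G) (n : nat) : G :=
  match n with O => gone G | S m => gmul G x (gpow x m) end.

Definition subgroup (H : G -> Prop) : Prop :=
  H (gone G) /\ (forall x y, H x -> H y -> H (gmul G x y))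
  /\ (forall x, H x -> H (ginv G x)).

Definition gen (S : G -> Prop) : G -> Prop :=
  fun x => forall H, subgroup H -> (forall y, S y -> H y) -> H x.

Definition comm (a b : G) : G :=
  gmul G (gmul G (ginv G a) (ginv G b)) (gmul G a b).

Definition derived (H : G -> Prop) : G -> Prop :=
  gen (fun x => exists a b, H a /\ H b /\ x = comm a b).

Fixpoint derived_series (n : nat) : G -> Prop :=
  match n with
  | O => fun _ => True
  | S m => derived (derived_series m)
  end.

Definition trivial_sub (H : G -> Prop) : Prop := forall x, H x -> x = gone G.

Definition soluble_of_derived_length (d : nat) : Prop :=
  trivial_sub (derived_series d) /\
  (forall n, n < d -> ~ trivial_sub (derived_series n)).

Definition generated_by (X : G -> Prop) : Prop := forall g, gen X g.

Definition conjg (x g : G) : G := gmul G (gmul G (ginv G g) x) g.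

Definition at_most_conjugates (x : G) (s : nat) : Prop :=
  exists l : list G, length l <= s /\ forall g, In (conjg x g) l.

Definition has_exponent (e : nat) : Prop :=
  0 < e /\ (forall g : G, gpow g e = gone G) /\
  (forall n, 0 < n -> (forall g : G, gpow g n = gone G) -> e <= n).

End GroupDefs.

From Stdlib Require Import List Arith Lia Wf_nat Classical ClassicalDescription.
Import ListNotations.

(* Induction on the derived length.  Let H = <X> and let N be the subgroup
   generated by the commutators [a, b] of H-conjugates a, b of generators.
   Then N is normal in H and contained in H', and H/N is abelian and generated
   by elements of order dividing r, so g^r lies in N for every g in H.  The
   generators of N have at most s^2 conjugates, and their orders are bounded
   by Dietz's collection argument: if x^H has at most s elements, then
   [a, b] = a^(r-1) a^b is a product of elements of x^H, and any such product
   can be collected into one with at most (r-1)s factors, so [a, b] has at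
   most (s+1)^((r-1)s) distinct powers. *)

Fixpoint exponent_bound (d r s : nat) : nat :=
  match d with
  | 0 => 1
  | S d => r * exponent_bound d (fact (S s ^ ((r - 1) * s))) (s * s)
  end.

Lemma exponent_bound_gt0 d : forall r s, 0 < r -> 0 < exponent_bound d r s.
Proof.
  induction d as [|d IH]; intros r s r_gt0; simpl; [lia|].
  apply Nat.mul_pos_pos; [exact r_gt0 | apply IH, lt_O_fact].
Qed.

Lemma divide_fact k n : 1 <= k <= n -> Nat.divide k (fact n).
Proof.
  induction n as [|n IH]; intros k_bounds; [lia|].
  change (fact (S n)) with (S n * fact n).
  destruct (Nat.eq_dec k (S n)) as [->|k_ne].
  - apply Nat.divide_factor_l.
  - apply Nat.divide_mul_r, IH. lia.
Qed.

Lemma length_remove_count_occ {A : Type} (eq_dec : forall x y : A, {x = y} + {x <> y})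
    (w : list A) (y : A) :
  length w = count_occ eq_dec w y + length (remove eq_dec y w).
Proof.
  induction w as [|z w IH]; simpl; [reflexivity|].
  destruct (eq_dec y z), (eq_dec z y); subst; simpl; try congruence; lia.
Qed.

Lemma count_occ_remove_le {A : Type} (eq_dec : forall x y : A, {x = y} + {x <> y})
    (w : list A) (y z : A) :
  count_occ eq_dec (remove eq_dec y w) z <= count_occ eq_dec w z.
Proof.
  induction w as [|a w IH]; simpl; [lia|].
  destruct (eq_dec y a), (eq_dec a z); simpl; try destruct (eq_dec a z); try congruence; lia.
Qed.

Lemma length_le_mul_count_occ {A : Type} (eq_dec : forall x y : A, {x = y} + {x <> y})
    (k : nat) (m w : list A) :
  incl w m -> (forall y, In y m -> count_occ eq_dec w y <= k) -> length w <= k * length m.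
Proof.
  revert w. induction m as [|y m IH]; intros w w_m count_le.
  - destruct w as [|z w]; [simpl; lia|]. destruct (w_m z (or_introl eq_refl)).
  - rewrite (length_remove_count_occ eq_dec w y). simpl.
    assert (count_y := count_le y (or_introl eq_refl)).
    enough (length (remove eq_dec y w) <= k * length m) by lia.
    apply IH.
    + intros z z_in. apply in_remove in z_in as [z_w z_ne].
      destruct (w_m z z_w) as [->|z_m]; [congruence | exact z_m].
    + intros z z_m. eapply Nat.le_trans; [apply count_occ_remove_le | apply count_le].
      right. exact z_m.
Qed.

Lemma Forall_repeat {A : Type} (P : A -> Prop) y n : P y -> Forall P (repeat y n).
Proof.
  intros Py. apply Forall_forall. intros z z_in. apply repeat_spec in z_in. subst. exact Py.
Qed.

Section SolubleGroupExponent.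

Variable G : Group.

Local Notation "x · y" := (gmul G x y) (at level 40, left associativity).
Local Notation e := (gone G).
Local Notation inv := (ginv G).
Local Notation "A ⊆ B" := (forall g, A g -> B g) (at level 70).

Lemma mulgA (x y z : G) : x · (y · z) = x · y · z.
Proof. apply gmul_assoc. Qed.

Lemma mul1g (x : G) : e · x = x.
Proof. apply gmul_1l. Qed.

Lemma mulVg (x : G) : inv x · x = e.
Proof. apply gmul_Vl. Qed.

Lemma mulgV (x : G) : x · inv x = e.
Proof.
  rewrite <- (mul1g (x · inv x)), <- (mulVg (inv x)) at 1.
  rewrite <- mulgA, (mulgA (inv x)), mulVg, mul1g. apply mulVg.
Qed.

Lemma mulg1 (x : G) : x · e = x.
Proof. rewrite <- (mulVg x), mulgA, mulgV, mul1g. reflexivity. Qed.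

Lemma invg_unique (a b : G) : a · b = e -> inv a = b.
Proof. intros ab. rewrite <- (mulg1 (inv a)), <- ab, mulgA, mulVg, mul1g. reflexivity. Qed.

Lemma invgK (x : G) : inv (inv x) = x.
Proof. apply invg_unique, mulVg. Qed.

Lemma invMg (x y : G) : inv (x · y) = inv y · inv x.
Proof.
  apply invg_unique. rewrite <- !mulgA, (mulgA y), mulgV, mul1g, mulgV. reflexivity.
Qed.

Lemma invg1 : inv e = e.
Proof. apply invg_unique, mul1g. Qed.

Lemma mulKg (x y : G) : inv x · (x · y) = y.
Proof. rewrite mulgA, mulVg, mul1g. reflexivity. Qed.

Lemma mulKVg (x y : G) : x · (inv x · y) = y.
Proof. rewrite mulgA, mulgV, mul1g. reflexivity. Qed.

Ltac group_simpl :=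
  unfold conjg, comm in *;
  repeat progress (rewrite ?invMg, ?invgK, ?invg1, ?mul1g, ?mulg1, ?mulgV, ?mulVg,
                     ?mulKg, ?mulKVg; rewrite <- ?mulgA).

Lemma mulgI (a b c : G) : a · b = a · c -> b = c.
Proof. intros abc. rewrite <- (mulKg a b), abc. group_simpl. reflexivity. Qed.

Lemma conjMg (a b g : G) : conjg G (a · b) g = conjg G a g · conjg G b g.
Proof. group_simpl. reflexivity. Qed.

Lemma conjVg (a g : G) : conjg G (inv a) g = inv (conjg G a g).
Proof. group_simpl. reflexivity. Qed.

Lemma conj1g (g : G) : conjg G e g = e.
Proof. group_simpl. reflexivity. Qed.

Lemma conjg1 (x : G) : conjg G x e = x.
Proof. group_simpl. reflexivity. Qed.

Lemma conjgM (x g h : G) : conjg G (conjg G x g) h = conjg G x (g · h).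
Proof. group_simpl. reflexivity. Qed.

Lemma conjR (a b g : G) :
  conjg G (comm G a b) g = comm G (conjg G a g) (conjg G b g).
Proof. group_simpl. reflexivity. Qed.

Lemma expgD (x : G) m n : gpow G x (m + n) = gpow G x m · gpow G x n.
Proof.
  induction m as [|m IH]; simpl; [rewrite mul1g | rewrite IH, mulgA]; reflexivity.
Qed.

Lemma expgM (x : G) m n : gpow G x (m * n) = gpow G (gpow G x m) n.
Proof.
  induction n as [|n IH]; simpl; [rewrite Nat.mul_0_r; reflexivity|].
  rewrite Nat.mul_succ_r, Nat.add_comm, expgD, IH. reflexivity.
Qed.

Lemma expg1n n : gpow G e n = e.
Proof. induction n as [|n IH]; simpl; [|rewrite IH, mul1g]; reflexivity. Qed.

Lemma expgSr (x : G) n : gpow G x (S n) = gpow G x n · x.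
Proof. rewrite <- Nat.add_1_r, expgD. simpl. rewrite mulg1. reflexivity. Qed.

Lemma expgVn (x : G) n : gpow G (inv x) n = inv (gpow G x n).
Proof.
  induction n as [|n IH]; [simpl; rewrite invg1; reflexivity|].
  rewrite expgSr, IH, <- invMg. reflexivity.
Qed.

Lemma conjXg (x g : G) n : conjg G (gpow G x n) g = gpow G (conjg G x g) n.
Proof.
  induction n as [|n IH]; simpl; [apply conj1g | rewrite conjMg, IH; reflexivity].
Qed.

Lemma subgroup_expg (H : G -> Prop) x n : subgroup G H -> H x -> H (gpow G x n).
Proof. intros (closed1 & closedM & _) Hx. induction n; simpl; auto. Qed.

Lemma subgroup_conjg (H : G -> Prop) x g : subgroup G H -> H x -> H g -> H (conjg G x g).
Proof. intros (_ & closedM & closedV) Hx Hg. unfold conjg. auto. Qed.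

Lemma mem_gen (S : G -> Prop) : S ⊆ gen G S.
Proof. intros g Sg H _ S_H. apply S_H, Sg. Qed.

Lemma gen_subgroup (S : G -> Prop) : subgroup G (gen G S).
Proof.
  split; [|split].
  - intros H (closed1 & _ & _) _. exact closed1.
  - intros x y Sx Sy H H_sub S_H. apply H_sub; [apply Sx | apply Sy]; assumption.
  - intros x Sx H H_sub S_H. apply H_sub, Sx; assumption.
Qed.

Lemma gen_min (S T : G -> Prop) : subgroup G T -> S ⊆ T -> gen G S ⊆ T.
Proof. intros T_sub S_T g Sg. apply Sg; assumption. Qed.

Lemma genS (S T : G -> Prop) : S ⊆ T -> gen G S ⊆ gen G T.
Proof.
  intros S_T. apply gen_min; [apply gen_subgroup|].
  intros g Sg. apply mem_gen, S_T, Sg.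
Qed.

Lemma gen_conj_closed (S K : G -> Prop) :
  (forall c g, S c -> K g -> S (conjg G c g)) ->
  forall n g, gen G S n -> K g -> gen G S (conjg G n g).
Proof.
  intros S_conj n g Sn. revert g.
  apply (gen_min S (fun n => forall g, K g -> gen G S (conjg G n g))); [| |exact Sn].
  - destruct (gen_subgroup S) as (closed1 & closedM & closedV). split; [|split].
    + intros g _. rewrite conj1g. exact closed1.
    + intros a b Sa Sb g Kg. rewrite conjMg. auto.
    + intros a Sa g Kg. rewrite conjVg. auto.
  - intros c Sc g Kg. apply mem_gen, S_conj; assumption.
Qed.

Lemma derivedS (A B : G -> Prop) : A ⊆ B -> derived G A ⊆ derived G B.
Proof.
  intros A_B. apply genS. intros g (a & b & Aa & Ab & ->). exists a, b. auto.
Qed.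

Lemma derived_sub (A : G -> Prop) : subgroup G A -> derived G A ⊆ A.
Proof.
  intros A_sub. apply gen_min; [exact A_sub|].
  intros g (a & b & Aa & Ab & ->). destruct A_sub as (_ & closedM & closedV).
  unfold comm. auto.
Qed.

Lemma iter_derivedS n (A B : G -> Prop) :
  A ⊆ B -> Nat.iter n (derived G) A ⊆ Nat.iter n (derived G) B.
Proof.
  intros A_B. induction n as [|n IH]; [exact A_B|].
  rewrite !Nat.iter_succ. apply derivedS, IH.
Qed.

Lemma derived_series_iter n : derived_series G n = Nat.iter n (derived G) (fun _ => True).
Proof. induction n as [|n IH]; [reflexivity|]. rewrite Nat.iter_succ, <- IH. reflexivity. Qed.

Definition deq (x y : G) : {x = y} + {x <> y} := excluded_middle_informative (x = y).

Definition prodg (w : list G) : G := fold_right (gmul G) e w.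

Lemma prodg_app v w : prodg (v ++ w) = prodg v · prodg w.
Proof.
  induction v as [|a v IH]; simpl; [rewrite mul1g | rewrite IH, mulgA]; reflexivity.
Qed.

Lemma prodg_repeat y n : prodg (repeat y n) = gpow G y n.
Proof. induction n as [|n IH]; simpl; congruence. Qed.

(* Products of at most [L] letters of [m]; shorter words are padded with [e]. *)
Fixpoint short_products (m : list G) (L : nat) : list G :=
  match L with
  | 0 => [e]
  | S L => flat_map (fun z => map (gmul G z) (short_products m L)) (e :: m)
  end.

Lemma length_short_products m L : length (short_products m L) = S (length m) ^ L.
Proof.
  induction L as [|L IH]; [reflexivity|]. cbn [short_products].
  rewrite (flat_map_constant_length (c := length (short_products m L))).
  - rewrite IH. reflexivity.
  - intros z _. apply length_map.
Qed.

Lemma in_short_products m L w :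
  length w <= L -> incl w m -> In (prodg w) (short_products m L).
Proof.
  revert w. induction L as [|L IH]; intros w w_len w_m.
  - destruct w; [left; reflexivity | simpl in w_len; lia].
  - cbn [short_products]. apply in_flat_map. destruct w as [|z w].
    + exists e. split; [left; reflexivity|].
      rewrite <- (mul1g (prodg [])). apply in_map, IH; [simpl; lia | intros ? []].
    + exists z. split; [right; apply w_m; left; reflexivity|].
      apply (in_map (gmul G z)), IH; [simpl in w_len; lia|].
      intros a a_w. apply w_m. right. exact a_w.
Qed.

Lemma exists_expg_eq1 (c : G) (P : list G) :
  (forall j, In (gpow G c j) P) -> exists k, 1 <= k <= length P /\ gpow G c k = e.
Proof.
  intros powers_in. apply NNPP. intros no_k.
  assert (powers_inj : forall i j, i < j <= length P -> gpow G c i <> gpow G c j).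
  { intros i j ij c_ij. apply no_k. exists (j - i). split; [lia|].
    apply (mulgI (gpow G c i)). rewrite <- expgD, mulg1.
    replace (i + (j - i)) with j by lia. symmetry. exact c_ij. }
  assert (nodup : NoDup (map (gpow G c) (seq 0 (S (length P))))).
  { apply NoDup_map_NoDup_ForallPairs; [|apply seq_NoDup].
    intros i j i_in j_in c_ij. apply in_seq in i_in, j_in.
    destruct (lt_eq_lt_dec i j) as [[ij|ij]|ji]; [| exact ij |].
    - destruct (powers_inj i j); [lia | exact c_ij].
    - destruct (powers_inj j i); [lia | symmetry; exact c_ij]. }
  assert (incl_P : incl (map (gpow G c) (seq 0 (S (length P)))) P).
  { intros z z_in. apply in_map_iff in z_in as (j & <- & _). apply powers_in. }
  pose proof (NoDup_incl_length nodup incl_P) as too_long.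
  rewrite length_map, length_seq in too_long. lia.
Qed.

Lemma expg_fact_eq1 (c : G) (P : list G) n :
  (forall j, In (gpow G c j) P) -> length P <= n -> gpow G c (fact n) = e.
Proof.
  intros powers_in P_len.
  destruct (exists_expg_eq1 c P powers_in) as (k & k_bounds & c_k).
  destruct (divide_fact k n) as [m ->]; [lia|].
  rewrite Nat.mul_comm, expgM, c_k. apply expg1n.
Qed.

Section Collection.

Variable C : G -> Prop.
Variables (r : nat) (l : list G).
Hypothesis r_gt0 : 0 < r.
Hypothesis C_conj : forall y z, C y -> C z -> C (conjg G z y).
Hypothesis C_exp : forall y, C y -> gpow G y r = e.
Hypothesis C_in : forall y, C y -> In y l.

Lemma C_conj_expg y z k : C y -> C z -> C (conjg G z (gpow G y k)).
Proof.
  intros Cy. revert z. induction k as [|k IH]; intros z Cz; simpl.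
  - rewrite conjg1. exact Cz.
  - rewrite <- conjgM. apply IH, C_conj; assumption.
Qed.

(* Moving the letters equal to [y] to the front conjugates the letters they pass. *)
Lemma collect_letter y w : C y -> Forall C w ->
  exists w', Forall C w' /\ length w' + count_occ deq w y = length w /\
             prodg w = gpow G y (count_occ deq w y) · prodg w'.
Proof.
  intros Cy. induction w as [|z w IH]; intros Cw.
  - exists []. simpl. rewrite mul1g. auto.
  - apply Forall_cons_iff in Cw as [Cz Cw].
    destruct (IH Cw) as (w1 & Cw1 & w1_len & w_prod). simpl.
    destruct (deq z y) as [->|z_ne].
    + exists w1. split; [exact Cw1|]. split; [simpl; lia|].
      simpl. rewrite w_prod, mulgA. reflexivity.
    + exists (conjg G z (gpow G y (count_occ deq w y)) :: w1). split.
      * constructor; [apply C_conj_expg |]; assumption.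
      * split; [simpl; lia|]. simpl. rewrite w_prod. group_simpl. reflexivity.
Qed.

Lemma short_word w : Forall C w ->
  exists w', Forall C w' /\ length w' <= (r - 1) * length l /\ prodg w' = prodg w.
Proof.
  induction w as [w IH] using (induction_ltof1 _ (@length G)). unfold ltof in IH.
  intros Cw.
  destruct (classic (exists y, In y l /\ r <= count_occ deq w y)) as [(y & _ & r_le)|no_y].
  - assert (Cy : C y).
    { rewrite Forall_forall in Cw. apply Cw, (count_occ_In deq). lia. }
    destruct (collect_letter y w Cy Cw) as (w1 & Cw1 & w1_len & w_prod).
    set (c := count_occ deq w y) in *.
    destruct (IH (repeat y (c - r) ++ w1)) as (w' & Cw' & w'_len & w'_prod).
    + rewrite length_app, repeat_length. lia.
    + apply Forall_app. split; [apply Forall_repeat |]; assumption.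
    + exists w'. split; [exact Cw'|]. split; [exact w'_len|].
      rewrite w'_prod, w_prod, prodg_app, prodg_repeat.
      replace c with (c - r + r) at 2 by lia.
      rewrite expgD, C_exp, mulg1 by exact Cy. reflexivity.
  - exists w. split; [exact Cw|]. split; [|reflexivity].
    apply (length_le_mul_count_occ deq).
    + intros z z_w. apply C_in. rewrite Forall_forall in Cw. apply Cw, z_w.
    + intros y y_l. destruct (le_lt_dec r (count_occ deq w y)); [|lia].
      exfalso. apply no_y. exists y. split; assumption.
Qed.

Lemma prodg_in_short_products n w : length l <= n -> Forall C w ->
  In (prodg w) (short_products l ((r - 1) * n)).
Proof.
  intros l_len Cw. destruct (short_word w Cw) as (w' & Cw' & w'_len & <-).
  apply in_short_products.
  - eapply Nat.le_trans; [exact w'_len | apply Nat.mul_le_mono_l, l_len].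
  - intros z z_w'. apply C_in. rewrite Forall_forall in Cw'. apply Cw', z_w'.
Qed.

Lemma comm_expg_fact a b n : C a -> C (conjg G a b) -> length l <= n ->
  gpow G (comm G a b) (fact (S n ^ ((r - 1) * n))) = e.
Proof.
  intros Ca Cab l_len.
  set (word := repeat a (r - 1) ++ [conjg G a b]).
  assert (C_word : Forall C word)
    by (apply Forall_app; split; [apply Forall_repeat | constructor]; auto).
  assert (word_prod : prodg word = comm G a b).
  { assert (inv_a : inv a = gpow G a (r - 1)).
    { apply invg_unique. change (gpow G a (S (r - 1)) = e).
      replace (S (r - 1)) with r by lia. apply C_exp, Ca. }
    unfold word. rewrite prodg_app, prodg_repeat, <- inv_a. simpl. group_simpl. reflexivity. }
  assert (powers : forall j, exists w, Forall C w /\ prodg w = gpow G (comm G a b) j).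
  { induction j as [|j (w & Cw & w_prod)]; [exists []; auto|].
    exists (word ++ w). split; [apply Forall_app; auto|].
    rewrite prodg_app, word_prod, w_prod. reflexivity. }
  apply (expg_fact_eq1 _ (short_products l ((r - 1) * n))).
  - intros j. destruct (powers j) as (w & Cw & <-). apply prodg_in_short_products; assumption.
  - rewrite length_short_products. apply Nat.pow_le_mono_l. lia.
Qed.

End Collection.

Section CongruenceModulo.

Variables X N : G -> Prop.
Hypothesis N_subgroup : subgroup G N.
Hypothesis N_normal : forall n g, N n -> gen G X g -> N (conjg G n g).

Definition eqmod (a b : G) : Prop := N (a · inv b).

Lemma eqmod_refl a : eqmod a a.
Proof. unfold eqmod. rewrite mulgV. apply N_subgroup. Qed.

Lemma eqmod_sym a b : eqmod a b -> eqmod b a.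
Proof.
  unfold eqmod. intros ab.
  replace (b · inv a) with (inv (a · inv b)) by (group_simpl; reflexivity).
  apply N_subgroup, ab.
Qed.

Lemma eqmod_trans a b c : eqmod a b -> eqmod b c -> eqmod a c.
Proof.
  unfold eqmod. intros ab bc.
  replace (a · inv c) with (a · inv b · (b · inv c)) by (group_simpl; reflexivity).
  apply N_subgroup; assumption.
Qed.

Lemma eqmod_mulr a b c : eqmod a b -> eqmod (a · c) (b · c).
Proof. unfold eqmod. intros ab. group_simpl. exact ab. Qed.

Lemma eqmod_mull a b c : gen G X c -> eqmod a b -> eqmod (c · a) (c · b).
Proof.
  unfold eqmod. intros Xc ab.
  replace (c · a · inv (c · b)) with (conjg G (a · inv b) (inv c))
    by (group_simpl; reflexivity).
  apply N_normal; [exact ab | apply gen_subgroup, Xc].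
Qed.

Lemma eqmod1 a : eqmod a e <-> N a.
Proof. unfold eqmod. rewrite invg1, mulg1. reflexivity. Qed.

Lemma commuting_mod_subgroup (P : G -> Prop) : P ⊆ gen G X ->
  subgroup G (fun g => gen G X g /\ forall y, P y -> eqmod (y · g) (g · y)).
Proof.
  intros P_X. destruct (gen_subgroup X) as (closed1 & closedM & closedV). split; [|split].
  - split; [exact closed1|]. intros y _. rewrite mul1g, mulg1. apply eqmod_refl.
  - intros g k (Xg & g_comm) (Xk & k_comm). split; [auto|]. intros y Py.
    rewrite mulgA. apply eqmod_trans with (g · y · k); [apply eqmod_mulr; auto|].
    rewrite <- !mulgA. apply eqmod_mull; auto.
  - intros g (Xg & g_comm). split; [auto|]. intros y Py.
    assert (conj_y : eqmod (inv g · (g · y)) (inv g · (y · g)))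
      by (apply eqmod_mull, eqmod_sym; auto).
    rewrite mulKg in conj_y. apply eqmod_mulr with (c := inv g) in conj_y.
    replace (inv g · (y · g) · inv g) with (inv g · y) in conj_y by (group_simpl; reflexivity).
    exact conj_y.
Qed.

Hypothesis comm_gens : forall x y, X x -> X y -> N (comm G x y).

Lemma eqmod_gens_commute x y : X x -> X y -> eqmod (x · y) (y · x).
Proof.
  intros Xx Xy. unfold eqmod.
  replace (x · y · inv (y · x)) with (conjg G (comm G x y) (inv (y · x)))
    by (group_simpl; reflexivity).
  apply N_normal; [auto|]. apply gen_subgroup, gen_subgroup; apply mem_gen; assumption.
Qed.

Lemma gen_commute_mod g h : gen G X g -> gen G X h -> eqmod (h · g) (g · h).
Proof.
  assert (commute_gens : forall k, gen G X k -> forall y, X y -> eqmod (y · k) (k · y)).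
  { intros k Xk. refine (proj2 (gen_min X _ (commuting_mod_subgroup X (mem_gen X)) _ k Xk)).
    intros x Xx. split; [apply mem_gen, Xx|]. intros y Xy. apply eqmod_gens_commute; assumption. }
  intros Xg Xh.
  refine (proj2 (gen_min X _ (commuting_mod_subgroup (gen G X) (fun _ Xk => Xk)) _ g Xg) h Xh).
  intros x Xx. split; [apply mem_gen, Xx|]. intros y Xy.
  apply eqmod_sym, commute_gens; assumption.
Qed.

Lemma expgMn_mod g h k : gen G X g -> gen G X h ->
  eqmod (gpow G (g · h) k) (gpow G g k · gpow G h k).
Proof.
  intros Xg Xh. destruct (gen_subgroup X) as (closed1 & closedM & closedV).
  induction k as [|k IH]; simpl; [rewrite mul1g; apply eqmod_refl|].
  apply eqmod_trans with (g · h · (gpow G g k · gpow G h k)); [apply eqmod_mull; auto|].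
  replace (g · h · (gpow G g k · gpow G h k)) with (g · (h · gpow G g k) · gpow G h k)
    by (rewrite !mulgA; reflexivity).
  replace (g · gpow G g k · (h · gpow G h k)) with (g · (gpow G g k · h) · gpow G h k)
    by (rewrite !mulgA; reflexivity).
  apply eqmod_mulr, eqmod_mull; [exact Xg|].
  apply gen_commute_mod; [apply subgroup_expg; [apply gen_subgroup|] | ]; assumption.
Qed.

Lemma gen_expg_mod r : (forall x, X x -> N (gpow G x r)) -> forall g, gen G X g -> N (gpow G g r).
Proof.
  intros X_exp k Xk. destruct (gen_subgroup X) as (closed1 & closedM & closedV).
  refine (proj2 (gen_min X (fun g => gen G X g /\ N (gpow G g r)) _ _ k Xk)).
  - split; [|split].
    + split; [exact closed1|]. rewrite expg1n. apply N_subgroup.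
    + intros g h (Xg & Ng) (Xh & Nh). split; [auto|]. apply eqmod1.
      apply eqmod_trans with (gpow G g r · gpow G h r); [apply expgMn_mod; assumption|].
      apply eqmod_trans with (gpow G g r · e).
      * apply eqmod_mull; [apply subgroup_expg; [apply gen_subgroup | exact Xg]|].
        apply eqmod1, Nh.
      * rewrite mulg1. apply eqmod1, Ng.
    + intros g (Xg & Ng). split; [auto|]. rewrite expgVn. apply N_subgroup, Ng.
  - intros x Xx. split; [apply mem_gen, Xx | apply X_exp, Xx].
Qed.

End CongruenceModulo.

Definition conj_class (H : G -> Prop) (x y : G) : Prop := exists h, H h /\ y = conjg G x h.

Definition at_most_conjugates_in (H : G -> Prop) (x : G) (s : nat) : Prop :=
  exists l : list G, length l <= s /\ forall h, H h -> In (conjg G x h) l.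

Lemma conj_class_conjg (H : G -> Prop) x y g :
  subgroup G H -> conj_class H x y -> H g -> conj_class H x (conjg G y g).
Proof.
  intros H_sub (h & Hh & ->) Hg. exists (h · g). split; [apply H_sub; assumption|].
  apply conjgM.
Qed.

Lemma conj_class_sub (H : G -> Prop) x : subgroup G H -> H x -> conj_class H x ⊆ H.
Proof. intros H_sub Hx y (h & Hh & ->). apply subgroup_conjg; assumption. Qed.

Section DerivedStep.

Variable X : G -> Prop.

Local Notation H := (gen G X).

Definition conj_closure (y : G) : Prop := exists x, X x /\ conj_class H x y.

Definition conj_commutators (c : G) : Prop :=
  exists a b, conj_closure a /\ conj_closure b /\ c = comm G a b.

Local Notation N := (gen G conj_commutators).

Lemma conj_closure_gens : X ⊆ conj_closure.
Proof.
  intros x Xx. exists x. split; [exact Xx|].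
  exists e. split; [apply gen_subgroup | symmetry; apply conjg1].
Qed.

Lemma conj_closure_gen : conj_closure ⊆ H.
Proof.
  intros y (x & Xx & x_y).
  apply (conj_class_sub H x); [apply gen_subgroup | apply mem_gen |]; assumption.
Qed.

Lemma conj_closure_conjg y g : conj_closure y -> H g -> conj_closure (conjg G y g).
Proof.
  intros (x & Xx & x_y) Hg. exists x. split; [exact Xx|].
  apply conj_class_conjg; [apply gen_subgroup | |]; assumption.
Qed.

Lemma conj_commutators_sub_derived : N ⊆ derived G H.
Proof.
  apply genS. intros c (a & b & Ca & Cb & ->). exists a, b. auto using conj_closure_gen.
Qed.

Lemma conj_commutators_sub_gen : N ⊆ H.
Proof. intros n Nn. apply derived_sub, conj_commutators_sub_derived, Nn. apply gen_subgroup. Qed.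

Lemma conj_commutators_normal n g : N n -> H g -> N (conjg G n g).
Proof.
  apply gen_conj_closed. intros c g' (a & b & Ca & Cb & ->) Hg'.
  rewrite conjR. exists (conjg G a g'), (conjg G b g'). auto using conj_closure_conjg.
Qed.

Variables r s : nat.
Hypothesis r_gt0 : 0 < r.
Hypothesis X_exp : forall x, X x -> gpow G x r = e.
Hypothesis X_conj : forall x, X x -> at_most_conjugates_in H x s.

Lemma gen_expg_conj_commutators g : H g -> N (gpow G g r).
Proof.
  apply gen_expg_mod.
  - apply gen_subgroup.
  - apply conj_commutators_normal.
  - intros x y Xx Xy. apply mem_gen. exists x, y. repeat split; auto using conj_closure_gens.
  - intros x Xx. rewrite X_exp by exact Xx. apply gen_subgroup.
Qed.

Lemma conj_commutators_expg c :
  conj_commutators c -> gpow G c (fact (S s ^ ((r - 1) * s))) = e.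
Proof.
  intros (a & b & (x & Xx & x_a) & Cb & ->).
  destruct (X_conj x Xx) as (l & l_len & l_in).
  assert (H_sub := gen_subgroup X). assert (Hx := mem_gen X x Xx).
  apply (comm_expg_fact (conj_class H x) r l r_gt0); auto.
  - intros y z x_y x_z. apply conj_class_conjg; auto.
    apply (conj_class_sub H x); assumption.
  - intros y (h & Hh & ->). rewrite <- conjXg, X_exp by exact Xx. apply conj1g.
  - intros y (h & Hh & ->). apply l_in, Hh.
  - apply conj_class_conjg; auto. apply conj_closure_gen, Cb.
Qed.

Lemma conj_commutators_conjugates c :
  conj_commutators c -> at_most_conjugates_in N c (s * s).
Proof.
  intros (a & b & (x & Xx & h & Hh & ->) & (x' & Xx' & h' & Hh' & ->) & ->).
  destruct (X_conj x Xx) as (l & l_len & l_in).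
  destruct (X_conj x' Xx') as (l' & l'_len & l'_in).
  exists (map (fun p => comm G (fst p) (snd p)) (list_prod l l')). split.
  - rewrite length_map, length_prod. apply Nat.mul_le_mono; assumption.
  - intros n Nn. apply conj_commutators_sub_gen in Nn.
    destruct (gen_subgroup X) as (_ & closedM & _).
    rewrite conjR, !conjgM. apply in_map_iff.
    exists (conjg G x (h · n), conjg G x' (h' · n)). split; [reflexivity|].
    apply in_prod; auto.
Qed.

End DerivedStep.

Lemma gen_expg_exponent_bound d : forall r s X, 0 < r ->
  (forall x, X x -> gpow G x r = e) ->
  (forall x, X x -> at_most_conjugates_in (gen G X) x s) ->
  (forall g, Nat.iter d (derived G) (gen G X) g -> g = e) ->
  forall g, gen G X g -> gpow G g (exponent_bound d r s) = e.
Proof.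
  induction d as [|d IH]; intros r s X r_gt0 X_exp X_conj X_sol g Xg.
  - simpl. rewrite (X_sol g Xg), mulg1. reflexivity.
  - simpl exponent_bound. rewrite expgM.
    apply (IH _ (s * s) (conj_commutators X)).
    + apply lt_O_fact.
    + apply conj_commutators_expg; assumption.
    + apply conj_commutators_conjugates, X_conj.
    + intros n Nn. apply X_sol. rewrite Nat.iter_succ_r.
      apply (iter_derivedS d _ _ (conj_commutators_sub_derived X)), Nn.
    + apply gen_expg_conj_commutators; assumption.
Qed.

Lemma has_exponent_le n : 0 < n -> (forall g : G, gpow G g n = e) ->
  exists m, has_exponent G m /\ m <= n.
Proof.
  intros n_gt0 exp_n.
  destruct (dec_inh_nat_subset_has_unique_least_element
              (fun k => 0 < k /\ forall g : G, gpow G g k = e))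
    as (m & ((m_gt0 & exp_m) & m_min) & _).
  - intros k. apply classic.
  - exists n. split; assumption.
  - exists m. split.
    + split; [exact m_gt0|]. split; [exact exp_m|].
      intros k k_gt0 exp_k. apply m_min. split; assumption.
    + apply m_min. split; assumption.
Qed.

End SolubleGroupExponent.

Theorem lemma2p6 :
  exists f : nat -> nat -> nat -> nat,
    forall (d r s : nat), 0 < d -> 0 < r -> 0 < s ->
    forall (G : Group) (X : G -> Prop),
      soluble_of_derived_length G d ->
      generated_by G X ->
      (forall x, X x -> gpow G x r = gone G) ->
      (forall x, X x -> at_most_conjugates G x s) ->
      exists e, has_exponent G e /\ e <= f d r s.
Proof.
  exists exponent_bound. intros d r s _ r_gt0 _ G X [G_sol _] G_gen X_exp X_conj.
  apply has_exponent_le; [apply exponent_bound_gt0, r_gt0|]. intros g.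
  apply (gen_expg_exponent_bound G d r s X r_gt0 X_exp); [| |apply G_gen].
  - intros x Xx. destruct (X_conj x Xx) as (l & l_len & l_in). exists l. auto.
  - intros g' Xg'. apply G_sol. rewrite derived_series_iter.
    apply (iter_derivedS G d (gen G X)); [intros; exact I | exact Xg'].
Qed.
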